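(* Let $U\in U(2^n)$ be an $n$-qubit unitary and $d=2^n$. Run the Twin-$U$ circuit with inputs $\vec i,\vec j\in\{0,1\}^n$. Then the probability of obtaining outputs $\vec k$ on register $\mathcal{A}$ and $\vec\ell$ on register $\mathcal{B}$ is $$P(\vec K=(\vec k,\vec\ell)\mid \vec J=(\vec i,\vec j)) = \frac{1}{d^2}\left|\mathrm{Tr}\!\left[U P^{\vec i,\vec j} U^T P^{\vec k,\vec\ell}\right]\right|^2,$$ where $U^T$ is the transpose in the computational basis.
   Context: Labeling of Paulis: $P^{00}=I$, $P^{01}=X$, $P^{10}=Z$, $P^{11}=Y$ (standard Pauli matrices), and $P^{\vec a,\vec b}=P^{a_1b_1}\otimes\cdots\otimes P^{a_nb_n}$. Twin-$U$ circuit: two registers $\mathcal{A},\mathcal{B}$ of $n$ qubits each are prepared in $|\vec i\rangle_{\mathcal{A}}|\vec j\rangle_{\mathcal{B}}$; apply $H^{\otimes n}$ to $\mathcal{A}$; apply CNOTs from qubit $r$ of $\mathcal{A}$ (control) to qubit $r$ of $\mathcal{B}$ (target), $r=1,\dots,n$; apply $U$ to $\mathcal{A}$ and $U$ to $\mathcal{B}$; apply the same transversal CNOTs again; apply $H^{\otimes n}$ to $\mathcal{A}$; measure both registers in the computational basis, yielding $\vec k$ on $\mathcal{A}$ and $\vec \ell$ on $\mathcal{B}$. *)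

From HB Require Import structures.
From mathcomp Require Import all_boot all_order all_algebra.
From mathcomp Require Import mxtens.
Set Implicit Arguments. Unset Strict Implicit. Unset Printing Implicit Defensive.
Import Order.TTheory GRing.Theory Num.Theory.
Local Open Scope ring_scope.

Section Qubits.
Variable C : numClosedFieldType.

Definition pauli (a b : bool) : 'M[C]_2 :=
  \matrix_(x < 2, y < 2)
    match a, b with
    | false, false => (x == y)%:R
    | false, true  => (x != y)%:R
    | true,  false => if x == y then (if x == 0 :> nat then 1 else -1) else 0
    | true,  true  => if x == y then 0 else
                        (if x == 0 :> nat then - 'i else 'i)
    end.

Definition hadamard : 'M[C]_2 :=
  (sqrtC 2)^-1 *: \matrix_(x < 2, y < 2) (if (x == 1 :> nat) && (y == 1 :> nat) then -1 else 1).

Definition proj (b : bool) : 'M[C]_2 := delta_mx (inord b) (inord b).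

(** qtens f n = f 0 (x) f 1 (x) ... (x) f (n-1) (Kronecker product);
    qubit 0 is the leftmost (most significant) tensor factor. *)
Fixpoint qtens_rec (f : nat -> 'M[C]_2) (k : nat) : 'M[C]_(2 ^ k.+1) :=
  match k return 'M[C]_(2 ^ k.+1) with
  | 0 => f 0%N
  | k'.+1 => f 0%N *t qtens_rec (fun r => f r.+1) k'
  end.
Definition qtens (f : nat -> 'M[C]_2) (n : nat) : 'M[C]_(2 ^ n) :=
  match n return 'M[C]_(2 ^ n) with
  | 0 => 1
  | k.+1 => qtens_rec f k
  end.

Definition ket1 (b : bool) : 'cV[C]_2 := \col_(x < 2) (x == b :> nat)%:R.

Fixpoint ket_rec (b : nat -> bool) (k : nat) : 'cV[C]_(2 ^ k.+1) :=
  match k return 'cV[C]_(2 ^ k.+1) with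
  | 0 => ket1 (b 0%N)
  | k'.+1 => ket1 (b 0%N) *t ket_rec (fun r => b r.+1) k'
  end.
Definition ket (b : nat -> bool) (n : nat) : 'cV[C]_(2 ^ n) :=
  match n return 'cV[C]_(2 ^ n) with
  | 0 => 1
  | k.+1 => ket_rec b k
  end.

Definition bitf (n : nat) (v : n.-tuple bool) : nat -> bool := fun r => nth false v r.

Definition pauli_str (n : nat) (a b : n.-tuple bool) : 'M[C]_(2 ^ n) :=
  qtens (fun r => pauli (bitf a r) (bitf b r)) n.

Definition hadamard_n (n : nat) : 'M[C]_(2 ^ n) := qtens (fun _ => hadamard) n.

Definition on_qubit (n : nat) (g : 'M[C]_2) (r : nat) : 'M[C]_(2 ^ n) :=
  qtens (fun s => if s == r then g else 1) n.

Definition cnot_AB (n : nat) (r : nat) : 'M[C]_(2 ^ n * 2 ^ n) :=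
  on_qubit n (proj false) r *t 1 + on_qubit n (proj true) r *t on_qubit n (pauli false true) r.

(** transversal CNOTs, r = 1..n (they commute; product in order r = 0 .. n-1) *)
Definition cnot_trans (n : nat) : 'M[C]_(2 ^ n * 2 ^ n) :=
  \prod_(r < n) cnot_AB n r.

Definition twinU_circuit (n : nat) (U : 'M[C]_(2 ^ n)) : 'M[C]_(2 ^ n * 2 ^ n) :=
  (hadamard_n n *t 1) *m cnot_trans n *m (U *t U) *m cnot_trans n *m (hadamard_n n *t 1).

(** P(K = (k,l) | J = (i,j)) = | <k|_A <l|_B  Circ  |i>_A |j>_B |^2  (Born rule) *)
Definition twinU_prob (n : nat) (U : 'M[C]_(2 ^ n)) (i j k l : n.-tuple bool) : C :=
  `| ((ket (bitf k) n *t ket (bitf l) n)^T *m twinU_circuit U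
        *m (ket (bitf i) n *t ket (bitf j) n)) 0 0 | ^+ 2.

Definition unitary_mx (d : nat) (U : 'M[C]_d) : Prop :=
  (map_mx Num.conj U)^T *m U = 1%:M /\ U *m (map_mx Num.conj U)^T = 1%:M.

End Qubits.

From HB Require Import structures.
From mathcomp Require Import all_boot all_order all_algebra.
From mathcomp Require Import fingroup perm mxtens ring.
Import Order.TTheory GRing.Theory Num.Theory.
Local Open Scope ring_scope.

(* After H^n on A and the transversal CNOTs, the input |i>|j> becomes the state
   2^(-n/2) sum_x (-1)^(i.x) |x>|x xor j>.  The CNOT layer and H^n (x) 1 are
   symmetric matrices, so the amplitude <k,l| circuit |i,j> is the bilinear form of
   U (x) U between two such states, namely
   2^(-n) sum_(x,x') (-1)^(k.x + i.x') U_(x,x') U_(x xor l, x' xor j).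
   Writing each Pauli string as a unimodular phase times Z^a X^b, the trace
   Tr[U P^(i,j) U^T P^(k,l)] expands, after reindexing both sums by xor, to the
   same double sum times a unimodular factor. *)

Lemma sum_mxtens_index (R : nmodType) N M (F : 'I_(N * M) -> R) :
  \sum_p F p = \sum_x \sum_y F (mxtens_index (x, y)).
Proof.
rewrite pair_big (reindex (@mxtens_index N M)) /=; first by apply: eq_bigr => -[].
by exists (@mxtens_unindex N M) => p _; rewrite (mxtens_indexK, mxtens_unindexK).
Qed.

Lemma bilinear_mx_entry (R : pzRingType) N (v w : 'cV[R]_N) (M : 'M[R]_N) :
  (v^T *m M *m w) 0 0 = \sum_p \sum_q v p 0 * M p q * w q 0.
Proof.
rewrite mxE; under eq_bigr do rewrite mxE mulr_suml.
by rewrite exchange_big; apply: eq_bigr => p _; apply: eq_bigr => q _; rewrite mxE.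
Qed.

Lemma tens_form_graph {R : comPzRingType} {N M : nat} (A : 'M[R]_N) (B : 'M[R]_M)
    {v w : 'cV[R]_(N * M)} {alpha beta : 'I_N -> R} {f g : 'I_N -> 'I_M} :
  (forall x y, v (mxtens_index (x, y)) 0 = alpha x * (y == f x)%:R) ->
  (forall x y, w (mxtens_index (x, y)) 0 = beta x * (y == g x)%:R) ->
  (v^T *m (A *t B) *m w) 0 0 =
    \sum_x \sum_x' alpha x * beta x' * A x x' * B (f x) (g x').
Proof.
move=> vE wE; rewrite bilinear_mx_entry sum_mxtens_index; apply: eq_bigr => x _.
rewrite (bigD1 (f x)) //= [X in _ + X]big1 ?addr0; last first.
  by move=> y /negbTE neq_y; apply: big1 => q _; rewrite vE neq_y mulr0 !mul0r.
rewrite sum_mxtens_index; apply: eq_bigr => x' _.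
rewrite (bigD1 (g x')) //= [X in _ + X]big1 ?addr0; last first.
  by move=> y' /negbTE neq_y'; rewrite wE neq_y' !mulr0.
by rewrite tensmxE vE wE !eqxx !mulr1 mulrAC mulrA.
Qed.

Lemma perm_mx_entry (R : pzRingType) N (s : 'S_N) p q :
  perm_mx s p q = (s p == q)%:R :> R.
Proof. by rewrite !mxE. Qed.

Definition bit_ord (b : bool) : 'I_2 := if b then ord_max else ord0.

Lemma bit_ordK (a : 'I_2) : bit_ord (a == 1%N :> nat) = a.
Proof. by apply: val_inj; case: a => [[|[|]]]. Qed.

Lemma bit_ord_eq1 b : (bit_ord b == 1%N :> nat) = b.
Proof. by case: b. Qed.

Lemma eq_bit_ord (a : 'I_2) b : (a == bit_ord b) = (a == b :> nat).
Proof. by case: b; case: a => [[|[|]]]. Qed.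

Lemma inord_bit (b : bool) : inord b = bit_ord b.
Proof. by apply: val_inj; case: b; rewrite /= inordK. Qed.

Lemma bit_ord_inj : injective bit_ord.
Proof. by case; case. Qed.

(* [bits n x r] is qubit [r] of the basis state [x]; qubit 0 is the most
   significant bit, as in [qtens] and [ket]. *)
Fixpoint bits_rec (k : nat) : 'I_(2 ^ k.+1) -> nat -> bool :=
  match k return 'I_(2 ^ k.+1) -> nat -> bool with
  | 0 => fun x r => if r is 0 then x == 1%N :> nat else false
  | k'.+1 => fun x r => let u := @mxtens_unindex 2 (2 ^ k'.+1) x in
      if r is r'.+1 then bits_rec k' u.2 r' else u.1 == 1%N :> nat
  end.

Definition bits n : 'I_(2 ^ n) -> nat -> bool :=
  match n return 'I_(2 ^ n) -> nat -> bool with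
  | 0 => fun _ _ => false
  | k.+1 => bits_rec k
  end.

Fixpoint of_bits_rec (k : nat) (b : nat -> bool) : 'I_(2 ^ k.+1) :=
  match k return 'I_(2 ^ k.+1) with
  | 0 => bit_ord (b 0%N)
  | k'.+1 => mxtens_index (bit_ord (b 0%N), of_bits_rec k' (fun r => b r.+1))
  end.

Definition of_bits n (b : nat -> bool) : 'I_(2 ^ n) :=
  match n return 'I_(2 ^ n) with
  | 0 => ord0
  | k.+1 => of_bits_rec k b
  end.

Lemma bits_recS k x r : bits_rec k.+1 x r =
  let u := @mxtens_unindex 2 (2 ^ k.+1) x in
  if r is r'.+1 then bits_rec k u.2 r' else u.1 == 1%N :> nat.
Proof. by []. Qed.

Lemma of_bits_recS k b : of_bits_rec k.+1 b =
  mxtens_index (bit_ord (b 0%N), of_bits_rec k (fun r => b r.+1)).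
Proof. by []. Qed.

Lemma bits_of_bits n b r : (r < n)%N -> bits n (of_bits n b) r = b r.
Proof.
case: n => // k; rewrite /bits /of_bits.
elim: k b r => [|k IH] b [|r] ltrk //; first exact: bit_ord_eq1.
  by rewrite bits_recS mxtens_indexK /= bit_ord_eq1.
by rewrite bits_recS mxtens_indexK /= IH.
Qed.

Lemma bits_inj n (x y : 'I_(2 ^ n)) :
  (forall r, (r < n)%N -> bits n x r = bits n y r) -> x = y.
Proof.
case: n x y => [|k] x y.
  by move=> _; apply: val_inj; case: x => [[|]] //; case: y => [[|]].
rewrite /bits; elim: k x y => [|k IH] x y eq_xy.
  by rewrite -(bit_ordK x) -(bit_ordK y) [_ == _](eq_xy 0%N).
case: (mxtens_indexP x) eq_xy => a x'; case: (mxtens_indexP y) => b y' eq_xy.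
have := eq_xy 0%N isT; rewrite !bits_recS !mxtens_indexK /= => eq_ab.
rewrite -(bit_ordK a) -(bit_ordK b) eq_ab (IH x' y') // => r ltrk.
by have := eq_xy r.+1 ltrk; rewrite !bits_recS !mxtens_indexK.
Qed.

Lemma eq_bitsP n (x y : 'I_(2 ^ n)) :
  reflect (forall r, (r < n)%N -> bits n x r = bits n y r) (x == y).
Proof. by apply: (iffP eqP) => [-> | /bits_inj]. Qed.

Lemma of_bitsK n : cancel (bits n) (of_bits n).
Proof. by move=> x; apply: bits_inj => r ltrn; rewrite bits_of_bits. Qed.

Lemma eq_of_bits n b b' :
  (forall r, (r < n)%N -> b r = b' r) -> of_bits n b = of_bits n b'.
Proof. by move=> eq_b; apply: bits_inj => r ltrn; rewrite !bits_of_bits ?eq_b. Qed.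

Definition xor_ord n (x : 'I_(2 ^ n)) (b : nat -> bool) : 'I_(2 ^ n) :=
  of_bits n (fun r => bits n x r (+) b r).

Lemma xor_ordK n b : involutive (xor_ord n ^~ b).
Proof.
move=> x; apply: bits_inj => r ltrn.
by rewrite !bits_of_bits // -addbA addbb addbF.
Qed.

Lemma eq_xor_ord n x b b' :
  (forall r, (r < n)%N -> b r = b' r) -> xor_ord n x b = xor_ord n x b'.
Proof. by move=> eq_b; apply: eq_of_bits => r ltrn; rewrite eq_b. Qed.

Lemma xor_ord0 n x : xor_ord n x (fun _ => false) = x.
Proof. by rewrite -[RHS]of_bitsK; apply: eq_of_bits => r _; rewrite addbF. Qed.

Lemma xor_ord_eq_sym n (x y : 'I_(2 ^ n)) b : (y == xor_ord n x b) = (x == xor_ord n y b).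
Proof. by apply/eqP/eqP => ->; rewrite xor_ordK. Qed.

Lemma xor_bits_eq n (x y : 'I_(2 ^ n)) b :
  (xor_ord n y (bits n x) == of_bits n b) = (y == xor_ord n x b).
Proof.
apply/eq_bitsP/eq_bitsP => eq_bits r ltrn; move: (eq_bits r ltrn);
  rewrite !bits_of_bits //; by case: (bits n x r) (bits n y r) (b r) => [] [] [].
Qed.

Lemma natr_prod_eq_bits (R : comPzRingType) n (x : 'I_(2 ^ n)) (b : nat -> bool) :
  \prod_(r < n) ((bits n x r == b r)%:R : R) = (x == of_bits n b)%:R.
Proof.
have [eq_x | /forallPn[r neq_r]] := boolP [forall r : 'I_n, bits n x r == b r].
  rewrite big1 => [|r _]; last by rewrite (forallP eq_x r).
  suff -> : x == of_bits n b by [].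
  apply/eq_bitsP => r ltrn.
  by rewrite bits_of_bits // (eqP (forallP eq_x (Ordinal ltrn))).
rewrite (bigD1 r) //= (negbTE neq_r) mul0r.
by case: (x =P of_bits n b) neq_r => // ->; rewrite bits_of_bits ?eqxx.
Qed.

Lemma natr_eq_of_bits_split (R : comPzRingType) n (x : 'I_(2 ^ n)) (b : nat -> bool) r :
  (r < n)%N -> ((x == of_bits n b)%:R : R) =
    (bits n x r == b r)%:R * \prod_(s < n | s != r :> nat) (bits n x s == b s)%:R.
Proof. by move=> ltrn; rewrite -natr_prod_eq_bits (bigD1 (Ordinal ltrn)). Qed.

(* The CNOTs from the qubits s of A with [c s] to the same qubits of B permute
   the basis states of A (x) B as (x, y) |-> (x, y xor (c /\ x)). *)
Definition cnot_map n (c : nat -> bool) (p : 'I_(2 ^ n * 2 ^ n)) : 'I_(2 ^ n * 2 ^ n) :=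
  let: (x, y) := mxtens_unindex p in mxtens_index (x, xor_ord n y (fun s => c s && bits n x s)).

Lemma cnot_mapE n c x y : cnot_map n c (mxtens_index (x, y)) =
  mxtens_index (x, xor_ord n y (fun s => c s && bits n x s)).
Proof. by rewrite /cnot_map mxtens_indexK. Qed.

Lemma cnot_mapK n c : involutive (cnot_map n c).
Proof. by move=> p; case: (mxtens_indexP p) => x y; rewrite !cnot_mapE xor_ordK. Qed.

Lemma eq_cnot_map n c c' :
  (forall s, (s < n)%N -> c s = c' s) -> cnot_map n c =1 cnot_map n c'.
Proof.
move=> eq_c p; case: (mxtens_indexP p) => x y; rewrite !cnot_mapE.
by congr (mxtens_index (_, _)); apply: eq_xor_ord => s ltsn; rewrite eq_c.
Qed.

Lemma cnot_map_comp n c c' p :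
  cnot_map n c' (cnot_map n c p) = cnot_map n (fun s => c s (+) c' s) p.
Proof.
case: (mxtens_indexP p) => x y; rewrite !cnot_mapE; congr (mxtens_index (_, _)).
by apply: bits_inj => s ltsn; rewrite !bits_of_bits // andb_addl addbA.
Qed.

Lemma xor_ord_control n x y r :
  xor_ord n y (fun s => pred1 r s && bits n x s) =
    if bits n x r then xor_ord n y (fun s => s == r) else y.
Proof.
case: ifP => x_r; last rewrite -[in RHS](xor_ord0 n y);
  apply: eq_xor_ord => s _; rewrite [pred1 r s]/=;
  by case: (s =P r) => [->|]; rewrite ?x_r.
Qed.

Definition cnot_perm n c : 'S_(2 ^ n * 2 ^ n) := perm (can_inj (cnot_mapK n c)).

Lemma cnot_permV n c : ((cnot_perm n c)^-1)%g = cnot_perm n c.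
Proof.
apply/permP => p; apply: (@perm_inj _ (cnot_perm n c)).
by rewrite permKV !permE cnot_mapK.
Qed.

Section TwinU.
Variable C : numClosedFieldType.

Lemma qtens_entry (f : nat -> 'M[C]_2) n x y :
  qtens f n x y = \prod_(r < n) f r (bit_ord (bits n x r)) (bit_ord (bits n y r)).
Proof.
case: n x y => [|k] x y.
  by rewrite big_ord0 /qtens; move: x y => [[|//] ?] [[|//] ?]; rewrite mxE.
rewrite /qtens /bits; elim: k f x y => [|k IH] f x y.
  by rewrite big_ord1 /= !bit_ordK.
case: (mxtens_indexP x) => a x'; case: (mxtens_indexP y) => b y'.
rewrite [qtens_rec _ _]/= tensmxE big_ord_recl IH; congr (_ * _).
  by rewrite !bits_recS !mxtens_indexK /= !bit_ordK.
by apply: eq_bigr => r _; rewrite !bits_recS !mxtens_indexK.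
Qed.

Lemma ket_entry b n x j : ket C b n x j = (x == of_bits n b)%:R.
Proof.
case: n x j => [|k] x j.
  by rewrite /ket /of_bits; move: x j => [[|//] ?] [[|//] ?]; rewrite mxE.
rewrite /ket /of_bits; elim: k b x j => [|k IH] b x j.
  by rewrite /= mxE; case: (b 0%N).
case: (mxtens_indexP x) => a x'.
rewrite [ket_rec _ _ _]/= mxE mxtens_indexK IH mxE of_bits_recS.
by rewrite (can_eq (@mxtens_indexK _ _)) xpair_eqE eq_bit_ord -mulnb natrM.
Qed.

Definition walsh n (a : nat -> bool) (x : 'I_(2 ^ n)) : C :=
  \prod_(r < n) (-1) ^+ (a r && bits n x r).

Lemma normr_walsh n a x : `|walsh n a x| = 1.
Proof. by rewrite normr_prod big1 // => r _; rewrite normr_sign. Qed.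

Lemma eq_walsh n a a' x :
  (forall r, (r < n)%N -> a r = a' r) -> walsh n a x = walsh n a' x.
Proof. by move=> eq_a; apply: eq_bigr => r _; rewrite eq_a. Qed.

Lemma walsh_bitsC n x y : walsh n (bits n x) y = walsh n (bits n y) x.
Proof. by apply: eq_bigr => r _; rewrite andbC. Qed.

Lemma walsh_xor n a x b :
  walsh n a (xor_ord n x b) = walsh n a x * walsh n a (of_bits n b).
Proof.
rewrite -big_split; apply: eq_bigr => r _ /=.
by rewrite !bits_of_bits // andb_addr signr_addb.
Qed.

Lemma hadamard_entry u v :
  hadamard C (bit_ord u) (bit_ord v) = (sqrtC 2)^-1 * (-1) ^+ (u && v).
Proof. by rewrite !mxE !bit_ord_eq1; case: u v => [] []; rewrite ?mulr1. Qed.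

Lemma hadamard_n_entry n x y :
  hadamard_n C n x y = (sqrtC 2)^-1 ^+ n * walsh n (bits n x) y.
Proof.
rewrite /hadamard_n qtens_entry (eq_bigr _ (fun r _ => hadamard_entry _ _)).
by rewrite big_split /= prodr_const card_ord.
Qed.

Lemma tr_hadamard_n n : (hadamard_n C n)^T = hadamard_n C n.
Proof.
by apply/matrixP => x y; rewrite mxE !hadamard_n_entry walsh_bitsC.
Qed.

Definition pauli_phase (a b : bool) : C := if a && b then - 'i else 1.

Lemma pauli_entry a b u v : pauli C a b (bit_ord u) (bit_ord v) =
  pauli_phase a b * (-1) ^+ (a && u) * (v == u (+) b)%:R.
Proof.
rewrite mxE /pauli_phase.
by case: a b u v => [] [] [] []; rewrite /= ?mulr1 ?mulr0 ?mul1r ?mulrN1 ?opprK.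
Qed.

(* Z^a X^b; [pauli_str] is this matrix times a phase, since Y = -i Z X. *)
Definition zx_mx n (a b : nat -> bool) : 'M[C]_(2 ^ n) :=
  \matrix_(x, y) (walsh n a x * (y == xor_ord n x b)%:R).

Lemma pauli_str_zx n (a b : n.-tuple bool) : pauli_str C a b =
  (\prod_(r < n) pauli_phase (bitf a r) (bitf b r)) *: zx_mx n (bitf a) (bitf b).
Proof.
apply/matrixP => x y; rewrite /pauli_str qtens_entry !mxE.
under eq_bigr do rewrite pauli_entry.
rewrite !big_split /= (natr_prod_eq_bits _ _ _ (fun r => bits n x r (+) bitf b r)).
by rewrite mulrA.
Qed.

Lemma on_qubit_entry n (g : 'M[C]_2) r x y : (r < n)%N ->
  on_qubit n g r x y = g (bit_ord (bits n x r)) (bit_ord (bits n y r)) *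
    \prod_(s < n | s != r :> nat) (bits n x s == bits n y s)%:R.
Proof.
move=> ltrn; rewrite /on_qubit qtens_entry (bigD1 (Ordinal ltrn)) //= eqxx.
congr (_ * _); apply: eq_bigr => s neq_sr.
by rewrite ifN // mxE (inj_eq bit_ord_inj).
Qed.

Lemma on_qubit_proj_entry n c r x y : (r < n)%N ->
  on_qubit n (proj C c) r x y = (bits n x r == c)%:R * (x == y)%:R.
Proof.
move=> ltrn; rewrite on_qubit_entry // -[y in RHS]of_bitsK.
rewrite (natr_eq_of_bits_split _ _ _ _ _ ltrn) mulrA; congr (_ * _).
rewrite mxE !inord_bit !(inj_eq bit_ord_inj).
by case: (bits n x r); case: (bits n y r); case: c; rewrite /= ?mulr1 ?mulr0.
Qed.

Lemma on_qubit_X_entry n r x y : (r < n)%N ->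
  on_qubit n (pauli C false true) r x y = (xor_ord n x (fun s => s == r) == y)%:R.
Proof.
move=> ltrn; rewrite eq_sym on_qubit_entry // pauli_entry mul1r.
rewrite (natr_eq_of_bits_split _ _ _ (fun s => bits n x s (+) (s == r)) _ ltrn) eqxx.
congr (_ * _); first by rewrite /= expr0 mul1r.
apply: eq_bigr => s /negbTE neq_sr.
by rewrite neq_sr addbF eq_sym.
Qed.

Lemma cnot_AB_perm n r : (r < n)%N -> cnot_AB C n r = perm_mx (cnot_perm n (pred1 r)).
Proof.
move=> ltrn; apply/matrixP => p q.
case: (mxtens_indexP p) => x y; case: (mxtens_indexP q) => x' y'.
rewrite perm_mx_entry permE cnot_mapE xor_ord_control (can_eq (@mxtens_indexK _ _)).
rewrite !mxE !mxtens_indexK !on_qubit_proj_entry // on_qubit_X_entry //.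
rewrite xpair_eqE -mulnb natrM.
by case: (bits n x r); rewrite /= ?mul0r ?mul1r ?add0r ?addr0.
Qed.

Lemma cnot_trans_perm n : cnot_trans C n = perm_mx (cnot_perm n (fun s => s < n)%N).
Proof.
suff prefix m : (m <= n)%N ->
    \prod_(r < m) cnot_AB C n r = perm_mx (cnot_perm n (fun s => s < m)%N).
  exact: prefix.
elim: m => [|m IH] le_mn.
  rewrite big_ord0 -[LHS]/(1%:M) -perm_mx1; congr perm_mx; apply/permP => p.
  rewrite perm1 permE; case: (mxtens_indexP p) => x y; rewrite cnot_mapE.
  by congr (mxtens_index (_, _)); apply/esym/xor_ord0.
rewrite big_ord_recr /= IH ?(ltnW le_mn) // cnot_AB_perm // -mulmxE -perm_mxM.
congr perm_mx; apply/permP => p; rewrite permM !permE cnot_map_comp.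
apply: eq_cnot_map => s _; rewrite [pred1 m s]/= [(s < m.+1)%N]ltnS [(s <= m)%N]leq_eqVlt.
by case: (ltngtP s m).
Qed.

Lemma tr_cnot_trans n : (cnot_trans C n)^T = cnot_trans C n.
Proof. by rewrite cnot_trans_perm tr_perm_mx cnot_permV. Qed.

Definition twin_prep n : 'M[C]_(2 ^ n * 2 ^ n) := cnot_trans C n *m (hadamard_n C n *t 1).

Lemma twinU_circuit_form n (U : 'M[C]_(2 ^ n)) (v w : 'cV[C]_(2 ^ n * 2 ^ n)) :
  v^T *m twinU_circuit U *m w = (twin_prep n *m v)^T *m (U *t U) *m (twin_prep n *m w).
Proof.
rewrite /twinU_circuit /twin_prep !trmx_mul trmx_tens tr_hadamard_n trmx1 tr_cnot_trans.
by rewrite !mulmxA.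
Qed.

Lemma ket_delta b n : ket C b n = delta_mx (of_bits n b) 0.
Proof. by apply/matrixP => x j; rewrite ket_entry mxE ord1 eqxx andbT. Qed.

Lemma twin_prep_ket_entry n i j x y :
  (twin_prep n *m (ket C i n *t ket C j n)) (mxtens_index (x, y)) 0 =
    (sqrtC 2)^-1 ^+ n * walsh n i x * (y == xor_ord n x j)%:R.
Proof.
rewrite /twin_prep -mulmxA tensmx_mul mul1mx cnot_trans_perm -row_permE mxE permE cnot_mapE.
rewrite mxE mxtens_indexK !ket_delta -colE [(_, _).1]/= [(_, _).2]/= !mxE.
rewrite hadamard_n_entry walsh_bitsC (@eq_walsh _ _ i) => [|r ltrn]; last exact: bits_of_bits.
rewrite (@eq_xor_ord _ _ _ (bits n x)) => [|r ltrn]; last by rewrite ltrn.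
by rewrite xor_bits_eq andbT.
Qed.

Lemma inv_sqrt2_expn_sqr n : (sqrtC 2)^-1 ^+ n * (sqrtC 2)^-1 ^+ n = ((2 ^ n)%:R)^-1 :> C.
Proof. by rewrite -exprMn -expr2 exprVn sqrtCK natrX exprVn. Qed.

Definition twin_sum n (U : 'M[C]_(2 ^ n)) (i j k l : nat -> bool) : C :=
  \sum_x \sum_x' walsh n k x * walsh n i x' * U x x' * U (xor_ord n x l) (xor_ord n x' j).

Lemma twinU_amplitude n (U : 'M[C]_(2 ^ n)) i j k l :
  ((ket C k n *t ket C l n)^T *m twinU_circuit U *m (ket C i n *t ket C j n)) 0 0 =
    ((2 ^ n)%:R)^-1 * twin_sum n U i j k l.
Proof.
rewrite twinU_circuit_form.
rewrite (tens_form_graph U U (twin_prep_ket_entry n k l) (twin_prep_ket_entry n i j)).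
rewrite mulr_sumr; apply: eq_bigr => x _; rewrite mulr_sumr; apply: eq_bigr => x' _.
by rewrite -inv_sqrt2_expn_sqr; ring.
Qed.

Lemma zx_mulmx_entry n a b (A : 'M[C]_(2 ^ n)) x y :
  (zx_mx n a b *m A) x y = walsh n a x * A (xor_ord n x b) y.
Proof.
rewrite mxE (bigD1 (xor_ord n x b)) //= [X in _ + X]big1 ?addr0 => [|z /negbTE neq_z].
  by rewrite mxE eqxx mulr1.
by rewrite mxE neq_z mulr0 mul0r.
Qed.

Lemma mulmx_zx_entry n a b (A : 'M[C]_(2 ^ n)) x y :
  (A *m zx_mx n a b) x y = A x (xor_ord n y b) * walsh n a (xor_ord n y b).
Proof.
rewrite mxE (bigD1 (xor_ord n y b)) //= [X in _ + X]big1 ?addr0 => [|z neq_z].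
  by rewrite mxE xor_ordK eqxx mulr1.
by rewrite mxE xor_ord_eq_sym (negbTE neq_z) mulr0 mulr0.
Qed.

Lemma twin_trace n (U : 'M[C]_(2 ^ n)) i j k l :
  \tr (U *m zx_mx n i j *m U^T *m zx_mx n k l) =
    walsh n k (of_bits n l) * twin_sum n U i j k l.
Proof.
rewrite mxtrace_mulC /mxtrace (reindex_inj (can_inj (xor_ordK n l))) /twin_sum mulr_sumr.
apply: eq_bigr => x _; rewrite zx_mulmx_entry xor_ordK mxE.
rewrite (reindex_inj (can_inj (xor_ordK n j))) !mulr_sumr; apply: eq_bigr => x' _.
by rewrite mulmx_zx_entry xor_ordK !mxE walsh_xor; ring.
Qed.

Lemma normr_pauli_phase a b : `|pauli_phase a b| = 1.
Proof. by rewrite /pauli_phase; case: (a && b); rewrite ?normrN ?normCi ?normr1. Qed.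

End TwinU.

Theorem lemma4 (C : numClosedFieldType) (n : nat) (U : 'M[C]_(2 ^ n))
    (i j k l : n.-tuple bool) :
  unitary_mx U ->
  twinU_prob U i j k l =
    ((2 ^ n)%:R ^+ 2)^-1
      * `| \tr (U *m pauli_str C i j *m U^T *m pauli_str C k l) | ^+ 2.
Proof.
move=> _.
have normr_phases (a b : n.-tuple bool) :
    `|\prod_(r < n) pauli_phase C (bitf a r) (bitf b r)| = 1.
  by rewrite normr_prod big1 // => r _; rewrite normr_pauli_phase.
rewrite /twinU_prob twinU_amplitude !pauli_str_zx.
rewrite -!scalemxAr -!scalemxAl !mxtraceZ twin_trace.
rewrite !normrM normr_walsh !normr_phases !mul1r exprMn.
by rewrite normfV normr_nat exprVn.
Qed.
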